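(* Let $K$, $c$, $s$ be as in the context, let $n\ge1$ and let $\gamma_1,\ldots,\gamma_n,\beta_1,\ldots,\beta_n$ be integers. For $i=1,\ldots,n$ let $B_i=\{j\in\{1,\ldots,n\}:\gamma_j=\gamma_i\}$, and let $\gamma_0=\max\{|\gamma_1|,\ldots,|\gamma_n|\}$. Let $F=(c^{s^{\gamma_1}})^{\beta_1}(c^{s^{\gamma_2}})^{\beta_2}\cdots(c^{s^{\gamma_n}})^{\beta_n}$, an element of the base group $K^{\langle s\rangle}$, regarded as a function $\langle s\rangle\to K$. If $\mu$ is an integer with $|\mu|>3\gamma_0$ and $\sum_{j\in B_i}\beta_j=0$ for $i=1,\ldots,n$, then $F(s^{\mu})=1$.
   Context: Notation: $x^y=yxy^{-1}$. For groups $A,B$, the wreath product $A\,\mathrm{Wr}\,B$ is the semidirect product $A^B\rtimes B$, where $A^B$ is the group of all functions $B\to A$ with pointwise multiplication and $B$ acts by $(bf)(x)=f(xb)$, written $f^b=bfb^{-1}$; in particular $(c^{s^{\gamma}})(s^k)=c(s^{k+\gamma})$. $H$ is a group generated by a countable set $\{a^{(1)},a^{(2)},\ldots\}$. Let $Z=\langle z\rangle$ be infinite cyclic and $b^{(i)}\in H^Z$ with $b^{(i)}(z^k)=a^{(i)}$ if $k>0$ and $1$ otherwise; $K=\langle z,b^{(i)}\ (i\in\mathbb{N})\rangle\le H\,\mathrm{Wr}\,Z$. Let $\langle s\rangle$ be infinite cyclic and $c\in K^{\langle s\rangle}$ with $c(s)=z$, $c(s^{2^i})=b^{(i)}$ for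 $i>0$, $c(s^k)=1$ otherwise; everything takes place in $K\,\mathrm{Wr}\,\langle s\rangle$. *)

From mathcomp Require Import all_boot all_order all_algebra.
Import GRing.Theory Num.Theory.
Set Implicit Arguments. Unset Strict Implicit. Unset Printing Implicit Defensive.

Definition is_group (G : Type) (mul : G -> G -> G) (one : G) (inv : G -> G) :=
  [/\ (forall x y z, mul x (mul y z) = mul (mul x y) z),
      (forall x, mul one x = x), (forall x, mul x one = x),
      (forall x, mul (inv x) x = one) & (forall x, mul x (inv x) = one)].

Definition zpow (G : Type) (mul : G -> G -> G) (one : G) (inv : G -> G)
  (x : G) (e : int) : G :=
  match e with
  | Posz m => iter m (mul x) one
  | Negz m => inv (iter m.+1 (mul x) one)
  end.

Definition gen_by (G : Type) (mul : G -> G -> G) (one : G) (inv : G -> G)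
  (a : nat -> G) :=
  forall h : G, exists l : seq (nat * bool),
    all (fun p => 0 < p.1)%N l /\
    h = foldr (fun p acc => mul (if p.2 then a p.1 else inv (a p.1)) acc) one l.

Section Wreath.
Variables (H : Type) (mulH : H -> H -> H) (oneH : H) (invH : H -> H).

(* H Wr Z = H^Z ⋊ Z, Z = <z>.  The pair (f, m) stands for f * z^m, where
   f : Z -> H is identified with int -> H via z^k |-> k.  The action is
   (z^m f z^-m)(z^k) = f(z^(k+m)), so
   (f z^m)(g z^n) = (f . (z^m g z^-m)) z^(m+n). *)
Definition WrZ := ((int -> H) * int)%type.
Definition wmul (x y : WrZ) : WrZ :=
  (fun k => mulH (x.1 k) (y.1 (k + x.2)%R), (x.2 + y.2)%R).
Definition wone : WrZ := (fun _ => oneH, 0%R).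
Definition winv (x : WrZ) : WrZ :=
  (fun k => invH (x.1 (k - x.2)%R), (- x.2)%R).

Variable a : nat -> H.
Definition zgen : WrZ := (fun _ => oneH, 1%R).
Definition bgen (i : nat) : WrZ :=
  (fun k => if (0 < k)%R then a i else oneH, 0%R).

(* c : <s> -> K (s^k identified with k):
   c(s) = z, c(s^(2^i)) = b^(i) for i > 0, c(s^k) = 1 otherwise. *)
Definition cfun (k : int) : WrZ :=
  if k == 1%R then zgen else
  match k with
  | Posz m => if (1 < m)%N && (m == 2 ^ trunc_log 2 m)%N
              then bgen (trunc_log 2 m) else wone
  | Negz _ => wone
  end.

Definition bmul (f g : int -> WrZ) : int -> WrZ := fun k => wmul (f k) (g k).
Definition bone : int -> WrZ := fun _ => wone.
Definition binv (f : int -> WrZ) : int -> WrZ := fun k => winv (f k).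
Definition bconj (f : int -> WrZ) (g : int) : int -> WrZ := fun k => f (k + g)%R.

Definition Fprod (n : nat) (gam bet : nat -> int) : int -> WrZ :=
  foldr bmul bone
    [seq zpow bmul bone binv (bconj cfun (gam j)) (bet j) | j <- iota 1 n].
End Wreath.

(** Evaluated at s^mu, F is the product of the powers c(s^(mu + gam_j))^(bet_j)
    in K.  Now c is trivial outside the powers of two, and two distinct powers
    of two differ by at least the smaller one.  Since |mu| > 3 gam_0, the shifts
    mu + gam_j are either all negative or all larger than 2 gam_0 while spanning
    at most 2 gam_0, so those that are powers of two all come from one value
    gam_i.  The product therefore collapses to
    c(s^(mu + gam_i))^(sum of bet_j over B_i) = c(s^(mu + gam_i))^0 = 1. *)

From mathcomp Require Import all_boot all_order all_algebra.
Import GRing.Theory Num.Theory.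
From mathcomp Require Import zify.
From Stdlib Require Import FunctionalExtensionality.

Section Group.
Set Implicit Arguments.
Variables (G : Type) (mul : G -> G -> G) (one : G) (inv : G -> G).
Hypothesis groupG : is_group mul one inv.

Local Notation zp := (zpow mul one inv).

Lemma grp_mulA x y z : mul x (mul y z) = mul (mul x y) z.
Proof. by case: groupG. Qed.

Lemma grp_mul1g x : mul one x = x.
Proof. by case: groupG. Qed.

Lemma grp_mulg1 x : mul x one = x.
Proof. by case: groupG. Qed.

Lemma grp_mulVg x : mul (inv x) x = one.
Proof. by case: groupG. Qed.

Lemma grp_mulgV x : mul x (inv x) = one.
Proof. by case: groupG. Qed.

Lemma grp_invM x y : inv (mul x y) = mul (inv y) (inv x).
Proof.
have inv_uniq u v : mul u v = one -> u = inv v.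
  by move=> uv1; rewrite -[u]grp_mulg1 -(grp_mulgV v) grp_mulA uv1 grp_mul1g.
symmetry; apply: inv_uniq.
by rewrite -grp_mulA (grp_mulA (inv x)) grp_mulVg grp_mul1g grp_mulVg.
Qed.

Lemma grp_iterSr x m : iter m.+1 (mul x) one = mul (iter m (mul x) one) x.
Proof.
elim: m => [|m IH]; first by rewrite /= grp_mulg1 grp_mul1g.
by rewrite iterS IH grp_mulA -IH.
Qed.

Lemma grp_zpowS x e : zp x (e + 1) = mul x (zp x e).
Proof.
case: e => [m|[|m]].
- by have -> : (Posz m + 1 = Posz m.+1)%R by lia.
- have -> : (Negz 0 + 1 = 0)%R by lia.
  by rewrite /= grp_mulg1 grp_mulgV.
- have -> : (Negz m.+1 + 1 = Negz m)%R by lia.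
  rewrite /= -/(iter m.+1 (mul x) one) -/(iter m.+2 (mul x) one).
  by rewrite (grp_iterSr x m.+1) grp_invM grp_mulA grp_mulgV grp_mul1g.
Qed.

Lemma grp_zpowSm x e : zp x (e - 1) = mul (inv x) (zp x e).
Proof. by rewrite -{2}(subrK 1%R e) grp_zpowS grp_mulA grp_mulVg grp_mul1g. Qed.

Lemma grp_zpowD x e1 e2 : zp x (e1 + e2) = mul (zp x e1) (zp x e2).
Proof.
elim/int_rec: e1 => [|m IH|m IH]; first by rewrite add0r grp_mul1g.
- have -> : (Posz m.+1 + e2 = (Posz m + e2) + 1)%R by lia.
  have -> : Posz m.+1 = (Posz m + 1)%R by lia.
  by rewrite !grp_zpowS IH grp_mulA.
- have -> : (- Posz m.+1 + e2 = (- Posz m + e2) - 1)%R by lia.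
  have -> : (- Posz m.+1 = - Posz m - 1)%R by lia.
  by rewrite !grp_zpowSm IH grp_mulA.
Qed.

Lemma grp_zpow1g e : zp one e = one.
Proof.
have iter1 m : iter m (mul one) one = one.
  by elim: m => //= m ->; rewrite grp_mul1g.
case: e => m /=; first exact: iter1.
by rewrite grp_mul1g iter1 -{2}(grp_mulVg one) grp_mulg1.
Qed.

Lemma foldr_zpow_collapse {I : eqType} (s : seq I) (P : pred I) (x0 : G)
    (x : I -> G) (e : I -> int) :
  (forall j, j \in s -> x j = if P j then x0 else one) ->
  foldr mul one [seq zp (x j) (e j) | j <- s] = zp x0 (\sum_(j <- s | P j) e j).
Proof.
elim: s => [|j s IH] xE; first by rewrite big_nil.
rewrite /= big_cons IH => [|i si]; last by apply: xE; rewrite inE si orbT.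
rewrite xE ?mem_head //; case: (P j); first by rewrite grp_zpowD.
by rewrite grp_zpow1g grp_mul1g.
Qed.

End Group.

Section WreathEval.
Variables (H : Type) (mulH : H -> H -> H) (oneH : H) (invH : H -> H).

Local Notation W := (WrZ H).
Local Notation wzp := (zpow (wmul mulH) (wone oneH) (winv invH)).

Lemma WrZ_is_group :
  is_group mulH oneH invH -> is_group (wmul mulH) (wone oneH) (winv invH).
Proof.
move=> groupH.
split=> [[x1 x2] [y1 y2] [z1 z2]|[x1 x2]|[x1 x2]|[x1 x2]|[x1 x2]];
  rewrite /wmul /wone /=; f_equal; rewrite ?addrA ?add0r ?addr0 ?addNr ?addrN //;
  apply: functional_extensionality => k.
- by rewrite (grp_mulA groupH) addrA.
- by rewrite (grp_mul1g groupH) addr0.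
- by rewrite (grp_mulg1 groupH).
- by rewrite (grp_mulVg groupH).
- by rewrite addrK (grp_mulgV groupH).
Qed.

Lemma zpow_bmulE (f : int -> W) e k :
  zpow (bmul mulH) (bone oneH) (binv invH) f e k = wzp (f k) e.
Proof.
have iterE m : iter m (bmul mulH f) (bone oneH) k = iter m (wmul mulH (f k)) (wone oneH).
  by elim: m => //= m <-.
by case: e => m; [exact: iterE | exact: (congr1 (winv invH) (iterE m.+1))].
Qed.

Lemma foldr_bmulE (l : seq (int -> W)) k :
  foldr (bmul mulH) (bone oneH) l k = foldr (wmul mulH) (wone oneH) [seq f k | f <- l].
Proof. by elim: l => //= f l <-. Qed.

Lemma FprodE a n gam bet k :
  Fprod mulH oneH invH a n gam bet k =
  foldr (wmul mulH) (wone oneH)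
    [seq wzp (cfun oneH a (k + gam j)) (bet j) | j <- iota 1 n].
Proof.
rewrite /Fprod foldr_bmulE -map_comp; congr foldr.
by apply: eq_map => j /=; rewrite zpow_bmulE.
Qed.

End WreathEval.

Definition is_pow2 (k : int) : bool :=
  if k is Posz m then m == 2 ^ trunc_log 2 m else false.

Lemma is_pow2P k : is_pow2 k -> exists e, k = Posz (2 ^ e).
Proof. by case: k => // m /eqP ->; eexists. Qed.

Lemma cfun_out (H : Type) (oneH : H) (a : nat -> H) k :
  ~~ is_pow2 k -> cfun oneH a k = wone oneH.
Proof.
rewrite /cfun; case: eqP => [-> //|_].
by case: k => // m; rewrite /is_pow2 => /negbTE ->; rewrite andbF.
Qed.

Lemma is_pow2_shift_uniq {mu g1 g2 : int} {g0 : nat} :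
  (3 * g0 < `|mu|)%N -> (`|g1| <= g0)%N -> (`|g2| <= g0)%N ->
  is_pow2 (mu + g1) -> is_pow2 (mu + g2) -> g1 = g2.
Proof.
move=> mu_big g1_small g2_small /is_pow2P[e1 E1] /is_pow2P[e2 E2].
have pow2_gap p q : (p < q)%N -> (2 * 2 ^ p <= 2 ^ q)%N.
  by move=> pq; rewrite -expnS leq_pexp2l.
by case: (ltngtP e1 e2) => [/pow2_gap|/pow2_gap|e12]; rewrite ?e12 in E1; lia.
Qed.

Theorem lemma3 (H : Type) (mulH : H -> H -> H) (oneH : H) (invH : H -> H)
  (a : nat -> H) (n : nat) (gam bet : nat -> int) (mu : int) :
  is_group mulH oneH invH ->
  gen_by mulH oneH invH a ->
  (1 <= n)%N ->
  (3 * \max_(1 <= i < n.+1) `|gam i|%N < `|mu|%N)%N ->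
  (forall i, (1 <= i <= n)%N ->
     (\sum_(1 <= j < n.+1 | gam j == gam i) bet j)%R = 0%R) ->
  Fprod mulH oneH invH a n gam bet mu = wone oneH.
Proof.
move=> groupH _ _ mu_big block_sum.
have groupW := WrZ_is_group groupH.
have iotaE : index_iota 1 n.+1 = iota 1 n by rewrite /index_iota subSS subn0.
rewrite iotaE in block_sum.
have gam_small j : j \in iota 1 n -> (`|gam j| <= \max_(1 <= i < n.+1) `|gam i|)%N.
  by move=> jn; apply: (@leq_bigmax_seq _ _ xpredT (fun i => `|gam i|%N)); rewrite ?iotaE.
rewrite FprodE; case: (boolP (has (fun j => is_pow2 (mu + gam j)) (iota 1 n))).
- case/hasP=> i iin pow2_i.
  rewrite (foldr_zpow_collapse groupW _ (fun j => gam j == gam i) (cfun oneH a (mu + gam i))).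
    by rewrite block_sum //; move: iin; rewrite mem_iota; lia.
  move=> j jn; case: eqP => [-> //|gji]; apply: cfun_out; apply: contra_notN gji => pow2_j.
  exact: (is_pow2_shift_uniq mu_big (gam_small j jn) (gam_small i iin) pow2_j pow2_i).
- move/hasPn=> no_pow2.
  rewrite (foldr_zpow_collapse groupW _ xpred0 (wone oneH)) ?big_pred0_eq //.
  by move=> j jn; rewrite cfun_out ?no_pow2.
Qed.
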